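(* Let $N\ge1$, $k\in\mathbb{Z}$, $m\in\mathbb{Z}_{>0}$, $\Gamma\in\{\Gamma_0(N),\Gamma_1(N)\}$, and let $\psi\in J^N_{k,\frac mN}(\Gamma)$ be meromorphic with simple poles at $z=z_s=\alpha\tau+\beta$ for $s=(\alpha,\beta)\in S(\psi)\subset\mathbb{Q}^2$. Then $D_{(\alpha+\lambda,\beta+\mu)}(\tau)=\mathbf{e}(\frac mN(\mu\alpha-\lambda\beta))D_{(\alpha,\beta)}(\tau)$ for $(\lambda,\mu)\in N\mathbb{Z}\times\mathbb{Z}$, and $D_s(\frac{a\tau+b}{c\tau+d})=(c\tau+d)^{k-1}D_{s\gamma}(\tau)$ for $\gamma=\begin{pmatrix}a&b\\c&d\end{pmatrix}\in\Gamma$, where $s\gamma=(a\alpha+c\beta,b\alpha+d\beta)$.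
   Context: $\mathbf{e}(t)=e^{2\pi it}$. $\Gamma_0(N)$: $c\equiv0\bmod N$; $\Gamma_1(N)$: also $a\equiv d\equiv1\bmod N$. $J^N_{k,\frac mN}(\Gamma)$: functions $\psi$ on $\mathbb{H}\times\mathbb{C}$ with $\psi(\frac{a\tau+b}{c\tau+d},\frac z{c\tau+d})=(c\tau+d)^k\mathbf{e}(\frac mN\frac{cz^2}{c\tau+d})\psi(\tau,z)$ for $\gamma\in\Gamma$ and $\psi(\tau,z+\lambda\tau+\mu)=\mathbf{e}(-\frac mN(\lambda^2\tau+2\lambda z+\lambda\mu))\psi(\tau,z)$ for $(\lambda,\mu)\in N\mathbb{Z}\times\mathbb{Z}$. $D_s(\tau)=2\pi i\,\mathbf{e}(\frac mN\alpha z_s)\operatorname{Res}_{z=z_s}\psi(\tau,z)$ for $s\in S(\psi)$. *)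

From mathcomp Require Import all_boot all_order all_algebra all_classical all_reals all_analysis.
From mathcomp Require Import complex.
Set Implicit Arguments. Unset Strict Implicit. Unset Printing Implicit Defensive.
Import numFieldNormedType.Exports.
Import Order.TTheory GRing.Theory Num.Theory.
Local Open Scope ring_scope.
Local Open Scope classical_set_scope.
Local Open Scope complex_scope.

Notation Cx R := ((R[i])^o).

Section JacobiDefs.
Variable R : realType.

Definition cexp (z : Cx R) : Cx R :=
  let: x +i* y := z in (expR x)%:C * ((cos y)%:C + 'i * (sin y)%:C).

Definition ee (t : Cx R) : Cx R := cexp (2 * (pi : R)%:C * 'i * t).

(* complex differentiability of f : C -> C at x (derivative w.r.t. complex h) *)
Definition cdifferentiable (f : Cx R -> Cx R) (x : Cx R) : Prop :=
  derivable f x 1.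

Definition upper (tau : Cx R) : Prop := let: x +i* y := tau in 0 < y.

Definition qC (q : rat) : Cx R := ratr q.

Definition zs (s : rat * rat) (tau : Cx R) : Cx R := qC s.1 * tau + qC s.2.

Definition poles (S : set (rat * rat)) (tau : Cx R) : set (Cx R) :=
  [set zs s tau | s in S].

Definition simple_res (f : Cx R -> Cx R) (z0 : Cx R) : Cx R :=
  lim ((fun z => (z - z0) * f z) @ z0^').

Definition has_simple_pole (f : Cx R -> Cx R) (z0 : Cx R) : Prop :=
  cvg ((fun z => (z - z0) * f z) @ z0^') /\ simple_res f z0 != 0.

Definition Dres (m N : nat) (psi : Cx R -> Cx R -> Cx R) (s : rat * rat)
    (tau : Cx R) : Cx R :=
  2 * (pi : R)%:C * 'i * ee (m%:R / N%:R * qC s.1 * zs s tau)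
    * simple_res (psi tau) (zs s tau).

Definition mobius (a b c d : int) (tau : Cx R) : Cx R :=
  (a%:~R * tau + b%:~R) / (c%:~R * tau + d%:~R).

End JacobiDefs.
Arguments qC {R}.

Inductive congr_group := Gamma0 | Gamma1.

Definition in_group (G : congr_group) (N : nat) (a b c d : int) : Prop :=
  a * d - b * c = 1 /\ (N%:Z %| c)%Z /\
  match G with
  | Gamma0 => True
  | Gamma1 => (a = 1 %[mod N%:Z])%Z /\ (d = 1 %[mod N%:Z])%Z
  end.

Definition sact (s : rat * rat) (a b c d : int) : rat * rat :=
  (a%:~R * s.1 + c%:~R * s.2, b%:~R * s.1 + d%:~R * s.2).

(* Values of psi at poles are irrelevant, so
   the transformation laws are only required away from the polar sets. *)
Definition meromorphic_jacobi (R : realType) (N : nat) (k : int) (m : nat)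
    (G : congr_group) (S : set (rat * rat)) (psi : Cx R -> Cx R -> Cx R) : Prop :=
  (* polar set is discrete and closed in z, for each tau in H *)
  (forall tau z0 : Cx R, upper tau -> \forall z \near z0^', ~ poles S tau z) /\
  (forall tau z : Cx R, upper tau -> ~ poles S tau z ->
      cdifferentiable (psi tau) z /\ cdifferentiable (fun t => psi t z) tau) /\
  (forall (tau : Cx R) s, upper tau -> S s -> has_simple_pole (psi tau) (zs s tau)) /\
  (forall a b c d : int, in_group G N a b c d ->
    forall tau z : Cx R, upper tau -> ~ poles S tau z ->
      ~ poles S (mobius a b c d tau) (z / (c%:~R * tau + d%:~R)) ->
      psi (mobius a b c d tau) (z / (c%:~R * tau + d%:~R)) =
        (c%:~R * tau + d%:~R) ^ k
        * ee (m%:R / N%:R * (c%:~R * z ^+ 2 / (c%:~R * tau + d%:~R)))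
        * psi tau z) /\
  (forall (lam mu : int), (N%:Z %| lam)%Z ->
    forall tau z : Cx R, upper tau -> ~ poles S tau z ->
      ~ poles S tau (z + lam%:~R * tau + mu%:~R) ->
      psi tau (z + lam%:~R * tau + mu%:~R) =
        ee (- (m%:R / N%:R * (lam%:~R ^+ 2 * tau + 2 * lam%:~R * z + lam%:~R * mu%:~R)))
        * psi tau z).

(* Both laws come from one transfer principle for simple poles: if
   g (a w + b) = h w * f w near w0, with a != 0 and h continuous at w0, then
   Res_{a w0 + b} g = a h(w0) Res_{w0} f, because (z - z0) g z equals
   a h(w) (w - w0) f(w) for z = a w + b.  The elliptic law of psi is such a
   relation with a = 1, b = lam tau + mu, and the modular law one with
   a = c tau + d, b = 0 (between psi at tau and at gamma tau).  The factors
   e(m/N alpha z_s) in D_s then absorb the automorphy factors exactly; in the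
   modular case this is the identity
   (a alpha + c beta) z_{s gamma} = alpha z_{s gamma} / (c tau + d)
                                    + c z_{s gamma}^2 / (c tau + d),
   which holds because ad - bc = 1. *)
From mathcomp Require Import all_boot all_order all_algebra all_classical all_reals all_analysis.
From mathcomp Require Import complex.
From mathcomp Require Import ring.
Import numFieldNormedType.Exports.
Import Order.TTheory GRing.Theory Num.Theory.
Local Open Scope ring_scope.
Local Open Scope classical_set_scope.
Local Open Scope complex_scope.

Section ComplexExponential.
Variable R : realType.
Implicit Types z w : Cx R.

Lemma cexpE (x y : R) :
  cexp (x +i* y : Cx R) = (expR x * cos y) +i* (expR x * sin y).
Proof. rewrite /cexp -[_ * _]/(_ +i* _); congr (_ +i* _); ring. Qed.

Lemma cexpD z w : cexp (z + w) = cexp z * cexp w.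
Proof.
case: z w => [x1 y1] [x2 y2]; rewrite -[(_ +i* _) + _]/(_ +i* _) !cexpE.
rewrite -[(_ +i* _) * _]/(_ +i* _) expRD cosD sinD; congr (_ +i* _); ring.
Qed.

Lemma cexp_neq0 z : cexp z != 0.
Proof.
have := cexpD z (- z); rewrite subrr.
have -> : cexp (0 : Cx R) = 1.
  have -> : (0 : Cx R) = 0 +i* 0 by [].
  by rewrite cexpE expR0 cos0 sin0 !mulr1 mulr0.
by move=> /eqP; apply: contraTneq => ->; rewrite mul0r oner_eq0.
Qed.

Lemma eeD z w : ee (z + w) = ee z * ee w.
Proof. by rewrite /ee mulrDr cexpD. Qed.

Lemma normc_ge_Im (z : Cx R) : `|complex.Im z|%:C <= `|z|.
Proof.
rewrite -[complex.Im z]opprK -ReiNIm normrN; apply: le_trans (normc_ge_Re _) _.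
by rewrite normrM [`|'i|]normc_def /= expr0n expr1n add0r sqrtr1 mulr1.
Qed.

Lemma additive_norm_le_continuous (f : Rcomplex R -> R) : zmod_morphism f ->
  (forall z, `|f z|%:C <= `|z : Cx R|) -> continuous (f : Cx R -> R).
Proof.
move=> fB fz z; apply/(@cvgrPdist_lt _ _ _ _ (nbhs_filter z)) => e e0.
have /cvgrPdist_lt/(_ e%:C) := (cvg_id : w @[w --> z] --> z).
rewrite ltcR => /(_ e0); apply: filterS => w; rewrite -ltcR -fB.
exact: le_lt_trans.
Qed.

Lemma Re_continuous : continuous (@complex.Re R : Cx R -> R).
Proof. by apply: additive_norm_le_continuous; [exact: raddfB | exact: normc_ge_Re]. Qed.

Lemma Im_continuous : continuous (@complex.Im R : Cx R -> R).
Proof. by apply: additive_norm_le_continuous; [exact: raddfB | exact: normc_ge_Im]. Qed.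

Lemma real_complex_continuous : continuous (fun x : R => x%:C : Cx R).
Proof.
move=> x; apply/(@cvgrPdist_lt _ _ _ _ (nbhs_filter x)) => e.
rewrite ltcE /= => /andP[/eqP Ie0 Re0].
have /cvgrPdist_lt/(_ _ Re0) := (cvg_id : t @[t --> x] --> x).
apply: filterS => t; rewrite -rmorphB normc_def /= expr0n addr0 sqrtr_sqr.
by rewrite ltcE /= Ie0 eqxx.
Qed.

Lemma cexp_continuous : continuous (@cexp R).
Proof.
pose u w := expR (complex.Re w) * cos (complex.Im w).
pose v w := expR (complex.Re w) * sin (complex.Im w).
have -> : @cexp R = fun z => ((u z)%:C : Cx R) + ('i : Cx R) * (v z)%:C.
  apply: funext => -[x y].
  by rewrite cexpE -[RHS]/(_ +i* _); congr (_ +i* _); rewrite /u /v /=; ring.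
move=> z; have cRe := Re_continuous z; have cIm := Im_continuous z.
have cexpRe := continuous_comp cRe (@continuous_expR R _).
apply: (@continuousD _ _ _ (fun w => (u w)%:C : Cx R) (fun w => ('i : Cx R) * (v w)%:C)).
  apply: (continuous_comp (f := u)); last exact: real_complex_continuous.
  exact: continuousM cexpRe (continuous_comp cIm (@continuous_cos R _)).
apply: (@continuousM _ _ (fun=> 'i : Cx R) (fun w => (v w)%:C : Cx R)); first exact: cst_continuous.
apply: (continuous_comp (f := v)); last exact: real_complex_continuous.
exact: continuousM cexpRe (continuous_comp cIm (@continuous_sin R _)).
Qed.

Lemma ee_continuous : continuous (@ee R).
Proof. by move=> z; apply: continuous_comp; [exact: mulrl_continuous | exact: cexp_continuous]. Qed.

Lemma ee_quadratic_continuous (a b c : Cx R) :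
  continuous (fun w => ee (a * w ^+ 2 + b * w + c)).
Proof.
move=> w0.
apply: (continuous_comp (f := fun w => a * w ^+ 2 + b * w + c)); last exact: ee_continuous.
apply: (@continuousD _ _ _ (fun w => a * w ^+ 2 + b * w) (fun=> c)); last exact: cst_continuous.
apply: (@continuousD _ _ _ (fun w => a * w ^+ 2) (fun w => b * w)).
  apply: (@continuousM _ _ (fun=> a) (fun w => w ^+ 2)); first exact: cst_continuous.
  exact: (@continuousM _ _ id id).
exact: mulrl_continuous.
Qed.

End ComplexExponential.

Section AffineResidue.
Variable K : numFieldType.
Implicit Types (a b : K) (f g h : K -> K).

Lemma cvg_affine a b (w0 : K) : (a * w + b) @[w --> w0] --> a * w0 + b.
Proof.
apply: (@cvgD _ _ _ (nbhs w0) _ (fun w => a * w) (fun _ => b)); last exact: cvg_cst.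
exact: mulrl_continuous.
Qed.

Lemma affine_dnbhs a b (w0 : K) : a != 0 -> (a * w + b) @[w --> w0^'] --> (a * w0 + b)^'.
Proof.
move=> a0 P HP; have /= := cvg_affine a b w0 _ HP.
rewrite /dnbhs /within; apply: (filterS (F := nbhs w0)) => w Pw w0w.
by apply: Pw; apply: contra w0w => /eqP /addIr /(mulfI a0) ->.
Qed.

Lemma cvg_residue_affine f g h a b (w0 L : K) :
  a != 0 -> {for w0, continuous h} ->
  (w - w0) * f w @[w --> w0^'] --> L ->
  (\forall w \near w0^', g (a * w + b) = h w * f w) ->
  (z - (a * w0 + b)) * g z @[z --> (a * w0 + b)^'] --> a * h w0 * L.
Proof.
move=> a0 hc fL gfh; set z0 := a * w0 + b.
pose phi z := a^-1 * z + - (a^-1 * b).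
have phiK z : a * phi z + b = z by rewrite /phi; field.
have phi_dn : phi z @[z --> z0^'] --> w0^'.
  have <- : phi z0 = w0 by rewrite /phi /z0; field.
  exact: affine_dnbhs (invr_neq0 a0).
have ev : \forall z \near z0^', a * (h (phi z) * ((phi z - w0) * f (phi z))) = (z - z0) * g z.
  apply: (filterS (F := z0^')) (phi_dn _ gfh) => z /=; rewrite phiK => ->.
  have -> : z - z0 = a * (phi z - w0) by rewrite /phi /z0; field.
  ring.
apply: cvg_trans (near_eq_cvg ev) _; rewrite -mulrA; apply: cvgMl_tmp.
have hdn : h w @[w --> w0^'] --> h w0 by exact: cvg_within_filter hc.
apply: cvgM; first exact: cvg_comp _ _ phi_dn hdn.
exact: cvg_comp _ _ phi_dn fL.
Qed.

End AffineResidue.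

Lemma simple_res_affine (R : realType) (f g h : Cx R -> Cx R) (a b w0 : Cx R) :
  a != 0 -> {for w0, continuous h} -> cvg ((fun w => (w - w0) * f w) @ w0^') ->
  (\forall w \near w0^', g (a * w + b) = h w * f w) ->
  simple_res g (a * w0 + b) = a * h w0 * simple_res f w0.
Proof.
move=> a0 hc fc gfh; apply: cvg_lim; first exact: norm_hausdorff.
exact: (@cvg_residue_affine _ f g h a b w0 _ a0 hc fc gfh).
Qed.

Section UpperHalfPlane.
Variable R : realType.

Lemma intr_complexE (n : int) : (n%:~R : Cx R) = (n%:~R : R) +i* 0.
Proof. by rewrite -[RHS]/((n%:~R : R)%:C) rmorph_int. Qed.

Lemma mobius_denom_neq0 (a b c d : int) (tau : Cx R) :
  a * d - b * c = 1 -> upper tau -> c%:~R * tau + d%:~R != 0 :> Cx R.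
Proof.
case: tau => x y det1 /= y0; have [c0|c0] := eqVneq c 0.
  rewrite c0 mul0r add0r intr_eq0; apply/eqP => d0.
  by move: det1; rewrite c0 d0 !mulr0 subr0 => /eqP; rewrite eq_sym oner_eq0.
apply/eqP => /(congr1 (@complex.Im R)); rewrite !intr_complexE /= mul0r !addr0 => /eqP.
by rewrite mulf_eq0 intr_eq0 (negPf c0) gt_eqF.
Qed.

Lemma upper_mobius (a b c d : int) (tau : Cx R) :
  a * d - b * c = 1 -> upper tau -> upper (mobius a b c d tau).
Proof.
move=> det1 up; have := @mobius_denom_neq0 a b c d _ det1 up.
case: tau up => x y /= y0.
set n := (c%:~R * x + d%:~R) ^+ 2 + (c%:~R * y) ^+ 2 => X0.
have n_gt0 : 0 < n.
  rewrite lt_def addr_ge0 ?sqr_ge0 // andbT; apply: contraNneq X0 => n0.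
  rewrite -normr_eq0 -sqrf_eq0 -add_Re2_Im2 !intr_complexE /= !mul0r !subr0 !addr0.
  by rewrite -/n n0.
have detR : (a%:~R * d%:~R - b%:~R * c%:~R : R) = 1 by rewrite -!intrM -intrB det1.
rewrite /mobius !intr_complexE /= !mul0r !subr0 !addr0 -/n; clearbody n.
have -> : (a%:~R * x + b%:~R) * - (c%:~R * y / n) + a%:~R * y * ((c%:~R * x + d%:~R) / n) = y / n.
  by rewrite -[y in RHS]mul1r -[1 in RHS]detR; ring.
exact: divr_gt0.
Qed.

Lemma zs_shift (s : rat * rat) (lam mu : int) (tau : Cx R) :
  zs (s.1 + lam%:~R, s.2 + mu%:~R) tau = zs s tau + (lam%:~R * tau + mu%:~R).
Proof. by rewrite /zs /qC /= !rmorphD /= !ratr_int; ring. Qed.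

Lemma qC_sact1 (s : rat * rat) (a b c d : int) :
  qC (sact s a b c d).1 = a%:~R * qC s.1 + c%:~R * qC s.2 :> Cx R.
Proof. by rewrite /qC /= rmorphD !rmorphM /= !ratr_int. Qed.

Lemma qC_sact2 (s : rat * rat) (a b c d : int) :
  qC (sact s a b c d).2 = b%:~R * qC s.1 + d%:~R * qC s.2 :> Cx R.
Proof. by rewrite /qC /= rmorphD !rmorphM /= !ratr_int. Qed.

Lemma zs_sact (s : rat * rat) (a b c d : int) (tau : Cx R) :
  zs (sact s a b c d) tau = (a%:~R * qC s.1 + c%:~R * qC s.2) * tau
                            + (b%:~R * qC s.1 + d%:~R * qC s.2).
Proof. by rewrite /zs qC_sact1 qC_sact2. Qed.

Lemma zs_mobius (s : rat * rat) (a b c d : int) (tau : Cx R) :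
  a * d - b * c = 1 -> upper tau ->
  zs s (mobius a b c d tau) = zs (sact s a b c d) tau / (c%:~R * tau + d%:~R).
Proof.
move=> det1 up; have X0 := @mobius_denom_neq0 a b c d _ det1 up.
have detC : (a%:~R * d%:~R - b%:~R * c%:~R : Cx R) = 1 by rewrite -!intrM -intrB det1.
rewrite zs_sact /zs /mobius; move: X0; set X := _ + _ => X0.
rewrite -[qC s.2 in LHS]mul1r -detC /X; field.
by rewrite -/X.
Qed.

End UpperHalfPlane.

Section ResidueTransformations.
Variables (R : realType) (N : nat) (k : int) (m : nat) (G : congr_group).
Variables (S : set (rat * rat)) (psi : Cx R -> Cx R -> Cx R).
Hypothesis psiJ : meromorphic_jacobi N k m G S psi.

Lemma simple_res_shift (s : rat * rat) (lam mu : int) (tau : Cx R) :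
  S s -> (N%:Z %| lam)%Z -> upper tau ->
  simple_res (psi tau) (zs s tau + (lam%:~R * tau + mu%:~R)) =
    ee (- (m%:R / N%:R * (lam%:~R ^+ 2 * tau + 2 * lam%:~R * zs s tau
                          + lam%:~R * mu%:~R)))
    * simple_res (psi tau) (zs s tau).
Proof.
case: psiJ => discrete [_ [simple [_ elliptic]]] Ss Nlam up.
set p := zs s tau; set sh := _ + mu%:~R; set K : Cx R := m%:R / N%:R.
set l : Cx R := lam%:~R; set u : Cx R := mu%:~R.
pose h w := ee (- (K * (l ^+ 2 * tau + 2 * l * w + l * u))).
have := @simple_res_affine R (psi tau) (psi tau) h 1 sh p (oner_neq0 _).
rewrite !mul1r; apply.
- have -> : h = fun w => ee (0 * w ^+ 2 + (- (K * (2 * l))) * w + - (K * (l ^+ 2 * tau + l * u))).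
    by apply: funext => w; rewrite /h; congr ee; ring.
  exact: ee_quadratic_continuous.
- by case: (simple tau s up Ss).
- have := @affine_dnbhs _ 1 sh p (oner_neq0 _) _ (discrete tau (1 * p + sh) up).
  apply: filterS2 (discrete tau p up) => w wP /=; rewrite mul1r => wshP.
  by rewrite /sh addrA in wshP *; exact: elliptic.
Qed.

Lemma Dres_shift (s : rat * rat) (lam mu : int) (tau : Cx R) :
  S s -> (N%:Z %| lam)%Z -> upper tau ->
  Dres m N psi (s.1 + lam%:~R, s.2 + mu%:~R) tau =
    ee (m%:R / N%:R * (mu%:~R * qC s.1 - lam%:~R * qC s.2)) * Dres m N psi s tau.
Proof.
move=> Ss Nlam up; rewrite /Dres zs_shift simple_res_shift //.
set C := 2 * _ * 'i; rewrite mulrA -(mulrA C) -eeD.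
set K : Cx R := m%:R / N%:R; set l : Cx R := lam%:~R; set u : Cx R := mu%:~R.
have -> : K * qC (s.1 + lam%:~R) * (zs s tau + (l * tau + u))
          - K * (l ^+ 2 * tau + 2 * l * zs s tau + l * u)
        = K * (u * qC s.1 - l * qC s.2) + K * qC s.1 * zs s tau.
  by rewrite /qC rmorphD /= ratr_int /zs; ring.
by rewrite eeD; ring.
Qed.

Lemma simple_res_mobius (a b c d : int) (s : rat * rat) (tau : Cx R) :
  in_group G N a b c d -> S s -> upper tau ->
  simple_res (psi (mobius a b c d tau)) (zs s (mobius a b c d tau)) =
    (c%:~R * tau + d%:~R) ^ (k - 1)
    * ee (m%:R / N%:R * (c%:~R * zs (sact s a b c d) tau ^+ 2 / (c%:~R * tau + d%:~R)))
    * simple_res (psi tau) (zs (sact s a b c d) tau).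
Proof.
case: psiJ => discrete [_ [simple [modular _]]] gam Ss up.
have det1 : a * d - b * c = 1 by case: gam.
have X0 := @mobius_denom_neq0 R a b c d _ det1 up.
have up' := @upper_mobius R a b c d _ det1 up.
move: (@zs_mobius R s a b c d tau det1 up) X0; set t' := mobius a b c d tau.
set q := zs (sact s a b c d) tau; set X := c%:~R * tau + d%:~R; set p := zs s t'.
set K : Cx R := m%:R / N%:R => pE X0.
have Xp : X * p + 0 = q by rewrite pE addr0 mulrC mulfVK.
pose M w := X ^ k * ee (K * (c%:~R * (X * w) ^+ 2 / X)).
have M0 w : M w != 0 by rewrite mulf_neq0 ?expfz_neq0 ?cexp_neq0.
(* sact s need not lie in S, so the residue of psi tau at q is obtained from
   that of psi t' at p, through psi tau (X w) = (M w)^-1 psi t' w. *)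
have := @simple_res_affine R (psi t') (psi tau) (fun w => (M w)^-1) X 0 p X0.
rewrite Xp => -> //.
- rewrite /M -[X * p]addr0 Xp expfzDr // exprN1.
  have E0 : ee (K * (c%:~R * q ^+ 2 / X)) != 0 by exact: cexp_neq0.
  move: E0 (expfz_neq0 k X0); set E := ee _; set Y := X ^ k; clearbody E Y.
  by move=> E0 Y0; field; rewrite E0 Y0.
- apply: continuousV; first exact: M0.
  have -> : M = fun w => X ^ k * ee ((K * c%:~R * X) * w ^+ 2 + 0 * w + 0).
    by apply: funext => w; rewrite /M; congr (_ * ee _); field.
  apply: (@continuousM _ _ (fun=> X ^ k)); first exact: cst_continuous.
  exact: ee_quadratic_continuous.
- by case: (simple t' s up' Ss).
- have := @affine_dnbhs _ X 0 p X0 _ (discrete tau (X * p + 0) up).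
  apply: filterS2 (discrete t' p up') => w wP /= Xw.
  have wX : X * w / X = w by rewrite mulrC mulKf.
  have := modular a b c d gam tau (X * w) up; rewrite -/t' -/X wX addr0 in Xw * => ->//.
  by rewrite mulKf ?M0.
Qed.

Lemma Dres_mobius (a b c d : int) (s : rat * rat) (tau : Cx R) :
  in_group G N a b c d -> S s -> upper tau ->
  Dres m N psi s (mobius a b c d tau) =
    (c%:~R * tau + d%:~R) ^ (k - 1) * Dres m N psi (sact s a b c d) tau.
Proof.
move=> gam Ss up; have det1 : a * d - b * c = 1 by case: gam.
have X0 := @mobius_denom_neq0 R a b c d _ det1 up.
rewrite /Dres simple_res_mobius // (@zs_mobius R s a b c d tau det1 up).
move: X0; set C := 2 * _ * 'i; set K : Cx R := m%:R / N%:R.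
set q := zs (sact s a b c d) tau; set X := _ + d%:~R => X0.
have -> : K * qC (sact s a b c d).1 * q
          = K * qC s.1 * (q / X) + K * (c%:~R * q ^+ 2 / X).
  have detC : (a%:~R * d%:~R - b%:~R * c%:~R : Cx R) = 1.
    by rewrite -!intrM -intrB det1.
  apply/eqP; rewrite -subr_eq0.
  rewrite (_ : _ - _ = K * qC s.1 * (q / X) * (a%:~R * d%:~R - b%:~R * c%:~R - 1)).
    by rewrite detC subrr mulr0.
  by rewrite qC_sact1 /q zs_sact /X; field.
by rewrite eeD; ring.
Qed.

End ResidueTransformations.

Theorem proposition4p3 (R : realType) (N : nat) (k : int) (m : nat)
    (G : congr_group) (S : set (rat * rat)) (psi : Cx R -> Cx R -> Cx R) :
  (1 <= N)%N -> (0 < m)%N ->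
  meromorphic_jacobi N k m G S psi ->
  (forall (s : rat * rat) (lam mu : int) (tau : Cx R),
      S s -> (N%:Z %| lam)%Z -> upper tau ->
      Dres m N psi (s.1 + lam%:~R, s.2 + mu%:~R) tau =
        ee (m%:R / N%:R * (mu%:~R * qC s.1 - lam%:~R * qC s.2)) * Dres m N psi s tau) /\
  (forall (a b c d : int) (s : rat * rat) (tau : Cx R),
      in_group G N a b c d -> S s -> upper tau ->
      Dres m N psi s (mobius a b c d tau) =
        (c%:~R * tau + d%:~R) ^ (k - 1) * Dres m N psi (sact s a b c d) tau).
Proof.
move=> _ _ psiJ; split.
  exact: (@Dres_shift R N k m G S psi psiJ).
exact: (@Dres_mobius R N k m G S psi psiJ).
Qed.
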